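(* Let $G$ be a graph and $\phi\colon E(G)\to\{\mathrm{red},\mathrm{blue}\}$ a $2$-edge coloring. Let $C$ be an alternating cycle in $\phi$, and let $\phi'$ be obtained from $\phi$ by inverting $C$. Then for each $\gamma\in\{\mathrm{red},\mathrm{blue}\}$, the set of conflicting edges of $G_{\gamma,\phi'}$ is a subset of the set of conflicting edges of $G_{\gamma,\phi}$.
   Context: All graphs are finite and simple. For a coloring $\phi$ and color $\gamma$, $G_{\gamma,\phi}=(V(G),\phi^{-1}(\gamma))$ is the spanning subgraph of edges of color $\gamma$. An edge $uv$ of a graph $H$ is conflicting in $H$ if $d_H(u)=d_H(v)$. An even cycle $C=(u_1,\ldots,u_k,u_{k+1}=u_1)$ of $G$ is an alternating cycle in $\phi$ if $\phi(u_iu_{i+1})\ne\phi(u_{i+1}u_{i+2})$ for all $1\le i<k$, and for every $1\le i\le k$, letting $\bar\gamma$ be the color different from $\phi(u_iu_{i+1})$, one has $d_{G_{\bar\gamma,\phi}}(u_i)\ne d_{G_{\bar\gamma,\phi}}(u_{i+1})$. The coloring obtained from $\phi$ by inverting $C$ is the coloring $\phi'$ with $\phi'(e)$ equal to the color other than $\phi(e)$ for $e\in E(C)$ and $\phi'(e)=\phi(e)$ otherwise. *)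

From mathcomp Require Import all_boot.
Set Implicit Arguments. Unset Strict Implicit. Unset Printing Implicit Defensive.

(* A finite simple graph: vertex type T : finType, adjacency e : rel T,
   symmetric and irreflexive.  An edge {x,y} is represented by the
   (symmetric) pair relation e x y. *)
Definition simple_graph (T : finType) (e : rel T) : Prop :=
  symmetric e /\ irreflexive e.

Definition color := bool.
Definition red : color := true.
Definition blue : color := false.
Definition other (g : color) : color := ~~ g.

(* A 2-edge coloring phi : E(G) -> {red, blue}, encoded as a function on
   vertex pairs that is symmetric on edges (values on non-edges are
   irrelevant). *)
Definition edge_coloring (T : finType) (e : rel T) (phi : T -> T -> color) :=
  forall x y, e x y -> phi x y = phi y x.

Definition cdeg (T : finType) (e : rel T) (phi : T -> T -> color)
    (gamma : color) (u : T) : nat :=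
  #|[set v | e u v & phi u v == gamma]|.

(* the (ordered pairs of endpoints of) conflicting edges of G_{gamma,phi} *)
Definition conflicting_edges (T : finType) (e : rel T)
    (phi : T -> T -> color) (gamma : color) : {set T * T} :=
  [set p | [&& e p.1 p.2, phi p.1 p.2 == gamma &
              cdeg e phi gamma p.1 == cdeg e phi gamma p.2]].

(* A cycle C = (u_1,...,u_k, u_{k+1} = u_1) is given by the sequence
   s = [:: u_1; ...; u_k] (0-indexed below), vertex i being cv s i and
   vertex i+1 taken cyclically. *)
Section Cyc.
Variable T : finType.
Variable x0 : T.
Definition cv (s : seq T) (i : nat) : T := nth x0 s (i %% size s).
End Cyc.

Definition is_cycle (T : finType) (e : rel T) (s : seq T) : Prop :=
  2 < size s /\ uniq s /\ cycle e s.

Definition alternating_cycle (T : finType) (e : rel T)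
    (phi : T -> T -> color) (s : seq T) : Prop :=
  is_cycle e s /\ ~~ odd (size s) /\
  (forall x0 : T, forall i, i.+1 < size s ->
      phi (cv x0 s i) (cv x0 s i.+1) != phi (cv x0 s i.+1) (cv x0 s i.+2)) /\
  (forall x0 : T, forall i, i < size s ->
      let gb := other (phi (cv x0 s i) (cv x0 s i.+1)) in
      cdeg e phi gb (cv x0 s i) != cdeg e phi gb (cv x0 s i.+1)).

Definition on_cycle (T : finType) (s : seq T) (x y : T) : bool :=
  has (fun i => ((x == cv x s i) && (y == cv x s i.+1)) ||
                ((y == cv x s i) && (x == cv x s i.+1)))
      (iota 0 (size s)) && (x \in s).

Definition invert_cycle (T : finType) (phi : T -> T -> color) (s : seq T)
    : T -> T -> color :=
  fun x y => if on_cycle s x y then other (phi x y) else phi x y.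

(* On an alternating cycle the two cycle edges at each vertex have different colours
   (the alternation closes up because the cycle is even), so inverting the cycle swaps
   them and leaves the degree of every vertex in each colour class unchanged. An edge off
   the cycle keeps its colour and hence its conflict status. A cycle edge that gets colour
   gamma had the other colour before, so by the definition of an alternating cycle its
   endpoints have different gamma-degrees, before and hence after the inversion. *)
From mathcomp Require Import all_boot perm.
Set Implicit Arguments. Unset Strict Implicit. Unset Printing Implicit Defensive.

Section CyclicIndexing.
Variables (T : finType) (s : seq T).

Lemma cv_nth x0 i : i < size s -> cv x0 s i = nth x0 s i.
Proof. by move=> lt_i; rewrite /cv modn_small. Qed.

Lemma cv_index x0 x : x \in s -> cv x0 s (index x s) = x.
Proof. by move=> xs; rewrite cv_nth ?index_mem // nth_index. Qed.

Lemma has_cv_iota x0 (P : pred T) :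
  has (P \o cv x0 s) (iota 0 (size s)) = has P s.
Proof.
rewrite -[in RHS](mkseq_nth x0 s) has_map; apply: eq_in_has => i.
by rewrite mem_iota => /andP[_ lt_i]; rewrite /= cv_nth.
Qed.

Hypothesis s_uniq : uniq s.

Lemma next_cv x0 i : next s (cv x0 s i) = cv x0 s i.+1.
Proof.
have [/size0nil -> | s_gt0] := posnP (size s); first by rewrite /cv !nth_nil.
rewrite /cv -[i.+1]addn1 -modnDml addn1.
have := ltn_pmod i s_gt0; move: (i %% _) => k lt_k.
rewrite next_nth mem_nth // index_uniq //.
case: s lt_k => [//|y p] /=; rewrite ltnS leq_eqVlt => /orP[/eqP ->|lt_k].
  by rewrite modnn nth_default.
by rewrite modn_small //= (set_nth_default x0).
Qed.

Lemma on_cycleE x y :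
  on_cycle s x y = (x \in s) && ((y == next s x) || (y == prev s x)).
Proof.
rewrite /on_cycle andbC; case xs: (x \in s) => //=.
transitivity (has (fun z => (x == z) && (y == next s z) ||
                            (y == z) && (x == next s z)) s).
  by rewrite -(has_cv_iota x); apply: eq_has => i /=; rewrite !next_cv.
apply/hasP/idP => [[z zs /orP[/andP[/eqP <- /eqP ->]|/andP[/eqP <- /eqP ->]]]|].
- by rewrite eqxx.
- by rewrite prev_next // eqxx orbT.
case/orP=> /eqP ->; first by exists x; rewrite // !eqxx.
by exists (prev s x); rewrite ?mem_prev // next_prev // !eqxx orbT.
Qed.

End CyclicIndexing.

Lemma alternating_periodic (f : nat -> bool) n :
  0 < n -> ~~ odd n -> (forall i, f (i %% n) = f i) ->
  (forall i, i.+1 < n -> f i != f i.+1) -> forall i, f i != f i.+1.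
Proof.
move=> n_gt0 n_even f_periodic f_alt.
have f_parity i : i < n -> f i = f 0 (+) odd i.
  elim: i => [|i IHi] lt_i; first by rewrite addbF.
  have := f_alt i lt_i; rewrite IHi ?(ltnW lt_i) //=.
  by case: (f i.+1); case: (f 0); case: (odd i).
move=> i; rewrite -f_periodic -(f_periodic i.+1).
rewrite (f_parity (i %% n)) ?(f_parity (i.+1 %% n)) ?ltn_pmod //.
rewrite !odd_mod ?(negPf n_even) //=.
by case: (f 0); case: (odd i).
Qed.

Section AlternatingCycle.
Variables (T : finType) (e : rel T) (phi : T -> T -> color) (s : seq T).
Hypotheses (e_sym : symmetric e) (phi_col : edge_coloring e phi).
Hypothesis s_alt : alternating_cycle e phi s.

Let s_uniq : uniq s. Proof. by case: s_alt => [[_ [? _]] _]. Qed.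
Let s_cycle : cycle e s. Proof. by case: s_alt => [[_ [_ ?]] _]. Qed.

Lemma phi_prev_neq_next x : x \in s -> phi x (prev s x) != phi x (next s x).
Proof.
case: s_alt => [[s_gt2 _] [s_even [s_alt_col _]]] xs.
have s_gt0 : 0 < size s := ltnW (ltnW s_gt2).
pose f i := phi (cv x s i) (cv x s i.+1).
have f_periodic i : f (i %% size s) = f i.
  by rewrite /f /cv modn_mod -[(_ %% _).+1]addn1 modnDml addn1.
have := alternating_periodic s_gt0 s_even f_periodic (s_alt_col x)
                             (index (prev s x) s).
rewrite /f -!next_cv // cv_index ?mem_prev // next_prev //.
by rewrite (phi_col (prev_cycle s_cycle xs)).
Qed.

Lemma cdeg_invert_cycle gamma v :
  cdeg e (invert_cycle phi s) gamma v = cdeg e phi gamma v.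
Proof.
rewrite /cdeg /invert_cycle; case vs: (v \in s); last first.
  by apply: eq_card => w; rewrite !inE /on_cycle vs andbF.
set a := next s v; set b := prev s v.
have col_ba : phi v b = ~~ phi v a.
  by move: (phi_prev_neq_next vs); case: (phi v a); case: (phi v b).
have eva : e v a by apply: next_cycle.
have evb : e v b by rewrite e_sym; apply: prev_cycle.
rewrite -(card_preimset _ (@perm_inj _ (tperm a b))); apply: eq_card => w.
rewrite !inE on_cycleE // vs -/a -/b.
case: (tpermP a b w) => [-> | -> | /eqP/negPf-> /eqP/negPf->] //=;
  by rewrite !eqxx ?orbT eva evb /other col_ba ?negbK.
Qed.

Lemma cdeg_next_neq u : u \in s ->
  cdeg e phi (other (phi u (next s u))) u !=
  cdeg e phi (other (phi u (next s u))) (next s u).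
Proof.
case: s_alt => _ [_ [_ s_alt_deg]] us.
by have := s_alt_deg u (index u s); rewrite index_mem -next_cv // cv_index //; apply.
Qed.

Lemma on_cycle_cdeg_neq x y : on_cycle s x y ->
  cdeg e phi (other (phi x y)) x != cdeg e phi (other (phi x y)) y.
Proof.
rewrite on_cycleE // => /andP[xs /orP[/eqP-> | /eqP->]]; first exact: cdeg_next_neq.
have := @cdeg_next_neq (prev s x); rewrite mem_prev xs next_prev // eq_sym => /(_ isT).
by rewrite (phi_col (prev_cycle s_cycle xs)).
Qed.

End AlternatingCycle.

Theorem lemma2p6 (T : finType) (e : rel T) (phi : T -> T -> color)
    (s : seq T) :
  simple_graph e -> edge_coloring e phi -> alternating_cycle e phi s ->
  forall gamma : color,
    conflicting_edges e (invert_cycle phi s) gamma \subset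
    conflicting_edges e phi gamma.
Proof.
move=> [e_sym _] phi_col s_alt gamma; apply/subsetP => -[x y].
rewrite !inE /= !(cdeg_invert_cycle e_sym phi_col s_alt).
move=> /and3P[exy col_xy deg_xy]; rewrite exy deg_xy andbT.
move: col_xy; rewrite /invert_cycle; case: ifP => // xy_on /eqP col_xy.
by have := on_cycle_cdeg_neq phi_col s_alt xy_on; rewrite col_xy deg_xy.
Qed.
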